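(* Let $c^1,\ldots,c^M$ and $s^1,\ldots,s^M$ be sequences of customer and server types whose FCFS matching $A$ is perfect. Define the exchanged sequences by $\tilde{s}^m=s^n$ and $\tilde{c}^n=c^m$ for each $(m,n)\in A$, and let $\tilde{A}=\{(n,m):(m,n)\in A\}$ (pairing $\tilde{c}^n$ with $\tilde{s}^m$). Then $\tilde{A}$ is the unique complete FCFS matching of $(\tilde{c}^n)_{n=1}^M$ and $(\tilde{s}^m)_{m=1}^M$ in reversed time, i.e. with respect to the reversed order of indices $M,M-1,\ldots,1$: for every $(n,m)\in\tilde{A}$, each $k>m$ with $(\tilde{c}^n,\tilde{s}^k)\in\mathcal{E}$ satisfies $(l,k)\in\tilde{A}$ for some $l>n$, and each $l>n$ with $(\tilde{c}^l,\tilde{s}^m)\in\mathcal{E}$ satisfies $(l,k)\in\tilde{A}$ for some $k>m$.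
   Context: Let $\mathcal{C}$ and $\mathcal{S}$ be finite sets of customer and server types and $G=(\mathcal{C},\mathcal{S},\mathcal{E})$ a connected bipartite compatibility graph. The FCFS matching of finite sequences $(c^m)$, $(s^n)$ is the unique set $A$ of index pairs with $(m,n)\in A\Rightarrow(c^m,s^n)\in\mathcal{E}$, each index in at most one pair, no unmatched compatible pair left, and such that for every $(m,n)\in A$, every $l<n$ with $(c^m,s^l)\in\mathcal{E}$ is matched to some $k<m$ and every $k<m$ with $(c^k,s^n)\in\mathcal{E}$ is matched to some $l<n$. It is perfect if every customer and every server is matched. *)

From mathcomp Require Import all_boot.
Set Implicit Arguments. Unset Strict Implicit. Unset Printing Implicit Defensive.

Definition bip_adj (C S : finType) (E : C -> S -> bool) : rel (C + S) :=
  fun u v => match u, v with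
             | inl x, inr y => E x y
             | inr y, inl x => E x y
             | _, _ => false
             end.

Definition bip_connected (C S : finType) (E : C -> S -> bool) : Prop :=
  forall u v : C + S, connect (bip_adj E) u v.

(* FCFS matching of c : 'I_Mc -> C and s : 'I_Ms -> S, with respect to
   "strictly earlier" relations befc (on customer indices) and befs (on
   server indices). *)
Definition fcfs_wrt (C S : finType) (E : C -> S -> bool) (Mc Ms : nat)
  (befc : rel 'I_Mc) (befs : rel 'I_Ms)
  (c : 'I_Mc -> C) (s : 'I_Ms -> S) (A : {set 'I_Mc * 'I_Ms}) : Prop :=
  [/\ (forall m n, (m, n) \in A -> E (c m) (s n)),
      (forall m n n', (m, n) \in A -> (m, n') \in A -> n = n'),
      (forall m m' n, (m, n) \in A -> (m', n) \in A -> m = m'),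
      (forall m n, E (c m) (s n) ->
         (exists n', (m, n') \in A) \/ (exists m', (m', n) \in A))
    & (forall m n, (m, n) \in A ->
         (forall l, befs l n -> E (c m) (s l) ->
            exists k, befc k m /\ (k, l) \in A) /\
         (forall k, befc k m -> E (c k) (s n) ->
            exists l, befs l n /\ (k, l) \in A))].

Definition fcfs (C S : finType) (E : C -> S -> bool) (Mc Ms : nat)
  (c : 'I_Mc -> C) (s : 'I_Ms -> S) (A : {set 'I_Mc * 'I_Ms}) : Prop :=
  fcfs_wrt E (fun k m => k < m) (fun l n => l < n) c s A.

Definition fcfs_rev (C S : finType) (E : C -> S -> bool) (Mc Ms : nat)
  (c : 'I_Mc -> C) (s : 'I_Ms -> S) (A : {set 'I_Mc * 'I_Ms}) : Prop :=
  fcfs_wrt E (fun k m => m < k) (fun l n => n < l) c s A.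

Definition perfect (Mc Ms : nat) (A : {set 'I_Mc * 'I_Ms}) : Prop :=
  (forall m, exists n, (m, n) \in A) /\ (forall n, exists m, (m, n) \in A).

From mathcomp Require Import all_boot.
From mathcomp Require Import zify.

Set Implicit Arguments.
Unset Strict Implicit.
Unset Printing Implicit Defensive.

(* In a perfect FCFS matching a pair (m, n) can never be overtaken: a later
   customer compatible with s n is matched to a later server, and a later
   server compatible with c m to a later customer (otherwise FCFS would have
   matched them earlier).  Read backwards in time this is exactly the FCFS
   property of the exchanged sequences.  Uniqueness of FCFS matchings with
   respect to any pair of total orders follows by induction on the sum of the
   ranks of the two indices of a pair. *)

Lemma mem_swap_imset (T1 T2 : finType) (A : {set T1 * T2}) x y :
  ((y, x) \in [set (p.2, p.1) | p in A]) = ((x, y) \in A).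
Proof. by apply/imsetP/idP => [[[a b] ab [-> ->]] // | xy]; exists (x, y). Qed.

Section FcfsNoOvertaking.

Variables (C S : finType) (E : C -> S -> bool) (Mc Ms : nat).
Variables (c : 'I_Mc -> C) (s : 'I_Ms -> S) (A : {set 'I_Mc * 'I_Ms}).
Hypothesis hA : fcfs E c s A.

Lemma fcfs_server_order m n l n' :
  (m, n) \in A -> (l, n') \in A -> m < l -> E (c m) (s n') -> n < n'.
Proof.
case: hA => _ _ inj_serv _ fcfsA mn ln' lt_ml e.
case: (ltngtP n n') => // [lt_n'n | /val_inj eq_nn'].
- have [k [lt_km kn']] := (fcfsA _ _ mn).1 _ lt_n'n e.
  by move: lt_km; rewrite (inj_serv _ _ _ kn' ln') ltnNge ltnW.
- by move: lt_ml; rewrite -eq_nn' in ln'; rewrite (inj_serv _ _ _ mn ln') ltnn.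
Qed.

Lemma fcfs_customer_order m n m' k :
  (m, n) \in A -> (m', k) \in A -> n < k -> E (c m') (s n) -> m < m'.
Proof.
case: hA => _ inj_cust _ _ fcfsA mn m'k lt_nk e.
case: (ltngtP m m') => // [lt_m'm | /val_inj eq_mm'].
- have [l [lt_ln m'l]] := (fcfsA _ _ mn).2 _ lt_m'm e.
  by move: lt_ln; rewrite (inj_cust _ _ _ m'l m'k) ltnNge ltnW.
- by move: lt_nk; rewrite -eq_mm' in m'k; rewrite (inj_cust _ _ _ mn m'k) ltnn.
Qed.

End FcfsNoOvertaking.

Section FcfsUniqueness.

Variables (C S : finType) (E : C -> S -> bool) (Mc Ms : nat).
Variables (befc : rel 'I_Mc) (befs : rel 'I_Ms).
Variables (c : 'I_Mc -> C) (s : 'I_Ms -> S).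
Variables (rkc : 'I_Mc -> nat) (rks : 'I_Ms -> nat).
Hypothesis rkc_mono : forall k m, befc k m -> rkc k < rkc m.
Hypothesis rks_mono : forall l n, befs l n -> rks l < rks n.
Hypothesis befc_total : forall m m', m != m' -> befc m m' \/ befc m' m.
Hypothesis befs_total : forall n n', n != n' -> befs n n' \/ befs n' n.

Let rk (p : 'I_Mc * 'I_Ms) := rkc p.1 + rks p.2.

Lemma befc_irrefl m : ~~ befc m m.
Proof. by apply/negP => /rkc_mono; rewrite ltnn. Qed.

Lemma befs_irrefl n : ~~ befs n n.
Proof. by apply/negP => /rks_mono; rewrite ltnn. Qed.

Lemma fcfs_wrt_subset_step (B B' : {set 'I_Mc * 'I_Ms}) m n :
  fcfs_wrt E befc befs c s B -> fcfs_wrt E befc befs c s B' ->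
  (forall p, rk p < rk (m, n) -> (p \in B) = (p \in B')) ->
  (m, n) \in B -> (m, n) \in B'.
Proof.
move=> [adj1 inj1 inj1' _ fcfs1] [adj2 inj2 inj2' max2 fcfs2] agree mn.
have [serv1 cust1] := fcfs1 _ _ mn.
apply/negPn/negP => mnB'.
case: (max2 _ _ (adj1 _ _ mn)) => [[n' mn'] | [m' m'n]].
- have [serv2 _] := fcfs2 _ _ mn'.
  have nn' : n != n' by apply: contraNneq mnB' => ->.
  case: (befs_total nn') => [bef | bef].
  + have [k [bkm kn]] := serv2 _ bef (adj1 _ _ mn).
    rewrite -agree /rk /= in kn; last by have := rkc_mono bkm; lia.
    by move: bkm; rewrite (inj1' _ _ _ kn mn) (negbTE (befc_irrefl m)).
  + have [k [bkm kn']] := serv1 _ bef (adj2 _ _ mn').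
    rewrite agree /rk /= in kn'; last by have := rkc_mono bkm; have := rks_mono bef; lia.
    by move: bkm; rewrite (inj2' _ _ _ kn' mn') (negbTE (befc_irrefl m)).
- have [_ cust2] := fcfs2 _ _ m'n.
  have mm' : m != m' by apply: contraNneq mnB' => ->.
  case: (befc_total mm') => [bef | bef].
  + have [l [bln ml]] := cust2 _ bef (adj1 _ _ mn).
    rewrite -agree /rk /= in ml; last by have := rks_mono bln; lia.
    by move: bln; rewrite (inj1 _ _ _ ml mn) (negbTE (befs_irrefl n)).
  + have [l [bln m'l]] := cust1 _ bef (adj2 _ _ m'n).
    rewrite agree /rk /= in m'l; last by have := rks_mono bln; have := rkc_mono bef; lia.
    by move: bln; rewrite (inj2 _ _ _ m'l m'n) (negbTE (befs_irrefl n)).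
Qed.

Lemma fcfs_wrt_uniq (B B' : {set 'I_Mc * 'I_Ms}) :
  fcfs_wrt E befc befs c s B -> fcfs_wrt E befc befs c s B' -> B = B'.
Proof.
move=> hB hB'.
suff agree_below N p : rk p < N -> (p \in B) = (p \in B').
  by apply/setP => p; apply: (agree_below (rk p).+1).
elim: N p => [//|N IH] [m n] ltN.
have agree p : rk p < rk (m, n) -> (p \in B) = (p \in B').
  by move=> lt; apply: IH; lia.
apply/idP/idP; first exact: fcfs_wrt_subset_step hB hB' agree.
by apply: fcfs_wrt_subset_step hB' hB _ => p /agree ->.
Qed.

End FcfsUniqueness.

Lemma fcfs_rev_uniq (C S : finType) (E : C -> S -> bool) (Mc Ms : nat)
    (c : 'I_Mc -> C) (s : 'I_Ms -> S) (B B' : {set 'I_Mc * 'I_Ms}) :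
  fcfs_rev E c s B -> fcfs_rev E c s B' -> B = B'.
Proof.
have total M (i j : 'I_M) : i != j -> j < i \/ i < j.
  move=> /eqP ne_ij; case: (ltngtP i j) => [||/val_inj //]; by [right | left].
apply: (fcfs_wrt_uniq (rkc := fun k => Mc - k) (rks := fun k => Ms - k)).
- by move=> k m /= lt_mk; have := ltn_ord k; lia.
- by move=> l n /= lt_nl; have := ltn_ord l; lia.
- exact: total.
- exact: total.
Qed.

Lemma perfect_swap (Mc Ms : nat) (A : {set 'I_Mc * 'I_Ms}) :
  perfect A -> perfect [set (p.2, p.1) | p in A].
Proof.
case=> cust_matched serv_matched; split.
- by move=> n; have [m mn] := serv_matched n; exists m; rewrite mem_swap_imset.
- by move=> m; have [n mn] := cust_matched m; exists n; rewrite mem_swap_imset.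
Qed.

Lemma perfect_fcfs_swap_rev (C S : finType) (E : C -> S -> bool) (Mc Ms : nat)
    (c : 'I_Mc -> C) (s : 'I_Ms -> S) (A : {set 'I_Mc * 'I_Ms})
    (ct : 'I_Ms -> C) (st : 'I_Mc -> S) :
  fcfs E c s A -> perfect A ->
  (forall m n, (m, n) \in A -> st m = s n /\ ct n = c m) ->
  fcfs_rev E ct st [set (p.2, p.1) | p in A].
Proof.
move=> hA [cust_matched serv_matched] hex.
have [adjA inj_custA inj_servA _ _] := hA.
split=> [n m | n m m' | n n' m | n m _ | n m].
- by rewrite mem_swap_imset => mn; have [-> ->] := hex _ _ mn; apply: adjA.
- by rewrite !mem_swap_imset; apply: inj_servA.
- by rewrite !mem_swap_imset; apply: inj_custA.
- by left; have [m' m'n] := serv_matched n; exists m'; rewrite mem_swap_imset.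
rewrite mem_swap_imset => mn; split=> [l /= lt_ml | k /= lt_nk].
- have [n' ln'] := cust_matched l.
  rewrite (hex _ _ mn).2 (hex _ _ ln').1 => e.
  by exists n'; rewrite mem_swap_imset (fcfs_server_order hA mn ln').
- have [m' m'k] := serv_matched k.
  rewrite (hex _ _ mn).1 (hex _ _ m'k).2 => e.
  by exists m'; rewrite mem_swap_imset (fcfs_customer_order hA mn m'k).
Qed.

Theorem lemma4p1 (C S : finType) (E : C -> S -> bool)
  (hconn : bip_connected E) (M : nat)
  (c : 'I_M -> C) (s : 'I_M -> S) (A : {set 'I_M * 'I_M})
  (hA : fcfs E c s A) (hperf : perfect A)
  (ct : 'I_M -> C) (st : 'I_M -> S)
  (hex : forall m n, (m, n) \in A -> st m = s n /\ ct n = c m) :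
  let At := [set (x.2, x.1) | x in A] in
  fcfs_rev E ct st At /\ perfect At /\
  (forall B : {set 'I_M * 'I_M}, fcfs_rev E ct st B -> B = At).
Proof.
move=> At.
have hAt : fcfs_rev E ct st At := perfect_fcfs_swap_rev hA hperf hex.
split=> //; split; first exact: perfect_swap hperf.
by move=> B hB; apply: fcfs_rev_uniq hB hAt.
Qed.
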